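(* Let $\mathcal{O}$ be a nonsymmetric operad, $\pi\in\mathcal{O}(2)$ a multiplication on $\mathcal{O}$, and $R\in\mathcal{O}(1)$ a Rota-Baxter element with respect to $\pi$, i.e. $(\pi\circ_2 R)\circ_1 R=R\circ_1(\pi\circ_1 R+\pi\circ_2 R)$. Put $\pi_\prec=\pi\circ_2 R$ and $\pi_\succ=\pi\circ_1 R$. Then $(\pi_\prec,\pi_\succ)$ is a dendriform-multiplication on $\mathcal{O}$.
   Context: A nonsymmetric operad $\mathcal{O}$ (over a commutative unital ring $\mathbf{k}$ of characteristic $0$) consists of $\mathbf{k}$-modules $\mathcal{O}(n)$, $n\ge1$, bilinear partial compositions $\circ_i:\mathcal{O}(m)\otimes\mathcal{O}(n)\to\mathcal{O}(m+n-1)$ and a unit $\mathds{1}\in\mathcal{O}(1)$ satisfying $(f\circ_i g)\circ_{i+j-1}h=f\circ_i(g\circ_j h)$, $(f\circ_i g)\circ_{j+n-1}h=(f\circ_j h)\circ_i g$ for $i<j$, and $f\circ_i\mathds{1}=\mathds{1}\circ_1 f=f$. A multiplication is $\pi\in\mathcal{O}(2)$ with $\pi\circ_1\pi=\pi\circ_2\pi$. A dendriform-multiplication on $\mathcal{O}$ is a pair $(\pi_\prec,\pi_\succ)$ of elements of $\mathcal{O}(2)$ with $\pi_\prec\circ_1\pi_\prec=\pi_\prec\circ_2(\pi_\prec+\pi_\succ)$, $\pi_\prec\circ_1\pi_\succ=\pi_\succ\circ_2\pi_\prec$, and $\pi_\succ\circ_1(\pi_\prec+\pi_\succ)=\pi_\succ\circ_2\pi_\succ$.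 *)

From HB Require Import structures.
From mathcomp Require Import all_boot all_order all_algebra.
Set Implicit Arguments. Unset Strict Implicit. Unset Printing Implicit Defensive.
Import GRing.Theory.
Local Open Scope ring_scope.

(* The component O n is the k-module O(n); only arities n >= 1 are meaningful
   (O 0 is an unused junk component).  ocomp m n i f g is f o_i g, meaningful
   for 1 <= i <= m.  Since the arities in the associativity axioms agree only
   propositionally, those axioms are stated as equalities of dependent pairs
   in {n & O n}. *)
Record nsOperad (k : comPzRingType) := NsOperad {
  op_mod : nat -> lmodType k;
  ocomp : forall m n : nat, nat -> op_mod m -> op_mod n -> op_mod (m + n - 1)%N;
  op_unit : op_mod 1;
  ocompDl : forall m n i (g : op_mod n) (f1 f2 : op_mod m),
    (1 <= i <= m)%N -> ocomp i (f1 + f2) g = ocomp i f1 g + ocomp i f2 g;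
  ocompZl : forall m n i (g : op_mod n) (a : k) (f : op_mod m),
    (1 <= i <= m)%N -> ocomp i (a *: f) g = a *: ocomp i f g;
  ocompDr : forall m n i (f : op_mod m) (g1 g2 : op_mod n),
    (1 <= i <= m)%N -> ocomp i f (g1 + g2) = ocomp i f g1 + ocomp i f g2;
  ocompZr : forall m n i (f : op_mod m) (a : k) (g : op_mod n),
    (1 <= i <= m)%N -> ocomp i f (a *: g) = a *: ocomp i f g;
  ocomp_seq : forall m n p i j (f : op_mod m) (g : op_mod n) (h : op_mod p),
    (1 <= m)%N -> (1 <= n)%N -> (1 <= p)%N ->
    (1 <= i <= m)%N -> (1 <= j <= n)%N ->
    existT op_mod _ (ocomp (i + j - 1) (ocomp i f g) h)
    = existT op_mod _ (ocomp i f (ocomp j g h));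
  ocomp_par : forall m n p i j (f : op_mod m) (g : op_mod n) (h : op_mod p),
    (1 <= m)%N -> (1 <= n)%N -> (1 <= p)%N ->
    (1 <= i)%N -> (i < j)%N -> (j <= m)%N ->
    existT op_mod _ (ocomp (j + n - 1) (ocomp i f g) h)
    = existT op_mod _ (ocomp i (ocomp j f h) g);
  ocomp_unitr : forall m i (f : op_mod m),
    (1 <= m)%N -> (1 <= i <= m)%N ->
    existT op_mod _ (ocomp i f op_unit) = existT op_mod _ f;
  ocomp_unitl : forall m (f : op_mod m),
    (1 <= m)%N -> existT op_mod _ (ocomp 1 op_unit f) = existT op_mod _ f
}.

Arguments ocomp {k} _ {m n} _ _ _.

Definition is_multiplication (k : comPzRingType) (O : nsOperad k) (pi : op_mod O 2) :=
  ocomp O 1 pi pi = ocomp O 2 pi pi.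

Definition is_rota_baxter (k : comPzRingType) (O : nsOperad k)
    (pi : op_mod O 2) (R : op_mod O 1) :=
  ocomp O 1 (ocomp O 2 pi R) R = ocomp O 1 R (ocomp O 1 pi R + ocomp O 2 pi R).

Definition is_dendriform_multiplication (k : comPzRingType) (O : nsOperad k)
    (pl pr : op_mod O 2) :=
  [/\ ocomp O 1 pl pl = ocomp O 2 pl (pl + pr),
      ocomp O 1 pl pr = ocomp O 2 pr pl
    & ocomp O 1 pr (pl + pr) = ocomp O 2 pr pr].

From Stdlib Require Import Eqdep_dec PeanoNat.
From mathcomp Require Import all_boot all_order all_algebra.
Import GRing.Theory.
Local Open Scope ring_scope.

(* Write [mu] for the ternary product [pi o_1 pi = pi o_2 pi].  In each of the
   three dendriform identities, use the Rota-Baxter identity wherever [R] is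
   applied to a binary operation, then push every [R] outwards with the operad
   axioms: both sides become [mu] with [R] inserted into the same two of its
   three inputs. *)

Section OperadIdentities.

Variables (k : comPzRingType) (O : nsOperad k).

Local Notation "f \o_ i g" := (ocomp O i f g) (at level 40, i at level 2).

Lemma existT_op_inj n (x y : op_mod O n) :
  existT (op_mod O) n x = existT (op_mod O) n y -> x = y.
Proof. exact: (inj_pair2_eq_dec _ Nat.eq_dec (op_mod O)). Qed.

(* The axioms [ocomp_seq] and [ocomp_par] compare elements whose arities are
   only propositionally equal; in the instances below both arities compute to
   the same number, so the axioms become plain equalities.  The outer index [l]
   is a parameter so that rewriting produces a numeral, not [i + j - 1]. *)

Lemma ocompA_last_unary {i j l} (f g : op_mod O 2) (a : op_mod O 1) :
  (1 <= i <= 2)%N -> (1 <= j <= 2)%N -> (i + j - 1 = l)%N ->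
  f \o_i (g \o_j a) = (f \o_i g) \o_l a.
Proof. by move=> Hi Hj <-; apply/esym/existT_op_inj; exact: (ocomp_seq f g a). Qed.

Lemma ocompA_mid_unary i (f : op_mod O 2) (a : op_mod O 1) (g : op_mod O 2) :
  (1 <= i <= 2)%N -> f \o_i (a \o_1 g) = (f \o_i a) \o_i g.
Proof.
move=> Hi; apply/esym/existT_op_inj.
rewrite -[X in ocomp O X _ g](addnK 1%N i).
exact: (ocomp_seq f a g).
Qed.

Lemma ocompC_unary {m i j} (f : op_mod O m) (a b : op_mod O 1) :
  (1 <= m)%N -> (1 <= i)%N -> (i < j <= m)%N ->
  (f \o_i a) \o_j b = (f \o_j b) \o_i a.
Proof.
move=> Hm Hi /andP[Hij Hjm]; apply/existT_op_inj.
by rewrite -[X in ocomp O X _ b](addnK 1%N j) ocomp_par.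
Qed.

Lemma ocompC_binary_unary (f g : op_mod O 2) (a : op_mod O 1) :
  (f \o_1 g) \o_3 a = (f \o_2 a) \o_1 g.
Proof. exact/existT_op_inj/(ocomp_par (i := 1%N) (j := 2%N)). Qed.

Lemma ocompC_unary_binary (f : op_mod O 2) (a : op_mod O 1) (g : op_mod O 2) :
  (f \o_1 a) \o_2 g = (f \o_2 g) \o_1 a.
Proof. exact/existT_op_inj/(ocomp_par (i := 1%N) (j := 2%N)). Qed.

Variables (pi : op_mod O 2) (R : op_mod O 1).
Hypotheses (pi_assoc : is_multiplication pi) (R_rota_baxter : is_rota_baxter pi R).

Local Notation prec := (pi \o_2 R).
Local Notation succ := (pi \o_1 R).
Local Notation mu := (pi \o_1 pi).

Lemma prec_precA : prec \o_1 prec = prec \o_2 (prec + succ).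
Proof.
have -> : prec \o_1 prec = (mu \o_3 R) \o_2 R.
  rewrite -ocompC_binary_unary (ocompA_last_unary (l := 2%N)) //.
  exact: (ocompC_unary (m := 3%N)).
rewrite -ocompA_mid_unary // addrC -R_rota_baxter.
rewrite (ocompA_last_unary (l := 2%N)) //.
by rewrite (ocompA_last_unary (l := 3%N)) // -pi_assoc.
Qed.

Lemma prec_succA : prec \o_1 succ = succ \o_2 prec.
Proof.
rewrite -ocompC_binary_unary (ocompA_last_unary (l := 1%N)) //.
rewrite ocompC_unary_binary (ocompA_last_unary (l := 3%N)) // -pi_assoc.
exact: (ocompC_unary (m := 3%N)).
Qed.

Lemma succ_succA : succ \o_1 (prec + succ) = succ \o_2 succ.
Proof.
have -> : succ \o_2 succ = (mu \o_2 R) \o_1 R.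
  by rewrite ocompC_unary_binary (ocompA_last_unary (l := 2%N)) // -pi_assoc.
rewrite -ocompA_mid_unary // addrC -R_rota_baxter.
by rewrite (ocompA_last_unary (l := 1%N)) // (ocompA_last_unary (l := 2%N)).
Qed.

End OperadIdentities.

Theorem proposition4p4 (k : comPzRingType)
    (char0 : forall n : nat, (n.+1)%:R != 0 :> k)
    (O : nsOperad k) (pi : op_mod O 2) (R : op_mod O 1) :
  is_multiplication pi -> is_rota_baxter pi R ->
  is_dendriform_multiplication (ocomp O 2 pi R) (ocomp O 1 pi R).
Proof.
move=> pi_assoc R_rota_baxter.
split; [exact: prec_precA | exact: prec_succA | exact: succ_succA].
Qed.
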